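(* Let $U,W$ be Hilbert spaces, $T: U\rightrightarrows U$, $(\hat u,\hat w)\in\operatorname{graph}T$, $\Xi,N,M\in\mathcal{L}(U;U)$ with $M\ge0$, and $\alpha>0$. Suppose: (i) $N=A^*B$ for some $A,B\in\mathcal{L}(U;W)$; (ii) $\Xi_\alpha:=\alpha^{-1}\Xi-\alpha^{-2}A^*A/4 \le \min\{1,\alpha^{-1}\}M$; (iii) $(M,M-\Xi_\alpha)\in\mathcal{P}(T^{-1}(\hat w),\hat u)$ when $\alpha\in(0,1)$. Then $T$ is $(\Xi_\alpha, B^*B, M)$-partially subregular at $(\hat u,\hat w)$ if it is $(\Xi,N,M)$-partially strongly submonotone at this point. If (iii) does not hold (but (i) and (ii) do), $(\Xi,N,M)$-partial strong submonotonicity at $(\hat u,\hat w)$ still implies $(\alpha\Xi_\alpha,\alpha B^*B,M)$-partial subregularity there.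
   Context: For $T\in\mathcal{L}(U;U)$: $\langle x,z\rangle_T:=\langle Tx,z\rangle$, $\|x\|^2_T:=\langle Tx,x\rangle$, $\operatorname{dist}^2_T(z,A):=\inf_{u\in A}\|z-u\|^2_T$ ($\inf\emptyset=+\infty$); $T\ge S$ means $T-S$ positive semidefinite. Partial strong submonotonicity: for $\Xi,N,M$ with $M\ge0$, $T$ is $(\Xi,N,M)$-partially strongly submonotone at $(\hat u,\hat w)$ if there is a neighbourhood $\mathcal{U}\ni\hat u$ with $\inf_{u^*\in T^{-1}(\hat w)}(\langle w-\hat w,u-u^*\rangle_N+\|u-u^*\|^2_{M-\Xi})\ge\operatorname{dist}^2_M(u,T^{-1}(\hat w))$ for all $u\in\mathcal{U}$, $w\in T(u)$. Partial subregularity: for $M,P,N$ with $N\ge0$, $M\ge0$, $M\ge P$, $T$ is $(P,N,M)$-partially subregular at $(\hat u,\hat w)$ if there is a neighbourhood $\mathcal{U}\ni\hat u$ with $\operatorname{dist}^2_N(\hat w,T(u))+\operatorname{dist}^2_{M-P}(u,T^{-1}(\hat w))\ge\operatorname{dist}^2_M(u,T^{-1}(\hat w))$ for all $u\in\mathcal{U}$. $(M,M')\in\mathcal{P}(A,\hat u)$ means there is a neighbourhood $\mathcal{U}'\ni\hat u$ such that each $u\in\mathcal{U}'$ has a common projection onto $A$ with respect to $\|\cdot\|_M$ and $\|\cdot\|_{M'}$. *)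

From HB Require Import structures.
From mathcomp Require Import all_boot all_order all_algebra.
From mathcomp Require Import all_classical all_reals all_analysis.
Import Order.TTheory GRing.Theory Num.Theory.
Import numFieldNormedType.Exports.

Set Implicit Arguments.
Unset Strict Implicit.
Unset Printing Implicit Defensive.

Local Open Scope classical_set_scope.
Local Open Scope ring_scope.

Section Defs.
Context {R : realType}.

Definition inner_product {U : normedModType R} (ip : U -> U -> R) : Prop :=
  [/\ forall x y, ip x y = ip y x,
      forall (a : R) x y z, ip (a *: x + y) z = a * ip x z + ip y z &
      forall x, ip x x = `|x| ^+ 2].

Definition bounded_linear {U V : normedModType R} (f : U -> V) : Prop :=
  linear f /\ continuous f.

Definition is_adjoint {U V : normedModType R} (ipU : U -> U -> R)
  (ipV : V -> V -> R) (A : U -> V) (As : V -> U) : Prop :=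
  forall u v, ipV (A u) v = ipU u (As v).

Context {U : normedModType R} (ip : U -> U -> R).

Definition opsub (S T : U -> U) : U -> U := fun x => S x - T x.
Definition opscale (a : R) (T : U -> U) : U -> U := fun x => a *: T x.

Definition ipT (T : U -> U) (x z : U) : R := ip (T x) z.
Definition nsq (T : U -> U) (x : U) : R := ip (T x) x.
(* dist^2_T(z, A), with inf of the empty set = +oo *)
Definition dist2 (T : U -> U) (z : U) (A : set U) : \bar R :=
  ereal_inf [set (nsq T (z - u))%:E | u in A].
Definition psd (T : U -> U) : Prop := forall x, 0 <= nsq T x.
Definition ople (S T : U -> U) : Prop := forall x, nsq S x <= nsq T x.

Definition invimg (T : U -> set U) (w : U) : set U := [set u | T u w].

Definition partially_strongly_submonotone (T : U -> set U) (Xi N M : U -> U)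
  (uh wh : U) : Prop :=
  psd M /\
  exists V, nbhs uh V /\
    forall u w, V u -> T u w ->
      (dist2 M u (invimg T wh) <=
       ereal_inf [set (ipT N (w - wh) (u - us) + nsq (opsub M Xi) (u - us))%:E
                 | us in invimg T wh])%E.

Definition partially_subregular (T : U -> set U) (P N M : U -> U)
  (uh wh : U) : Prop :=
  [/\ psd N, psd M, ople P M &
  exists V, nbhs uh V /\
    forall u, V u ->
      (dist2 M u (invimg T wh) <=
       dist2 N wh (T u) + dist2 (opsub M P) u (invimg T wh))%E].

Definition is_proj (M : U -> U) (A : set U) (u p : U) : Prop :=
  A p /\ forall a, A a -> nsq M (u - p) <= nsq M (u - a).

Definition common_proj (M M' : U -> U) (A : set U) (uh : U) : Prop :=
  exists V, nbhs uh V /\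
    forall u, V u -> exists p, is_proj M A u p /\ is_proj M' A u p.

End Defs.

From HB Require Import structures.
From mathcomp Require Import all_boot all_order all_algebra.
From mathcomp Require Import all_classical all_reals all_analysis.
From mathcomp Require Import lra.
Import Order.TTheory GRing.Theory Num.Theory.
Import numFieldNormedType.Exports.

Set Implicit Arguments.
Unset Strict Implicit.
Unset Printing Implicit Defensive.

Local Open Scope classical_set_scope.
Local Open Scope ring_scope.

(* Write beta = alpha^-1, d = dist^2_M(u, T^-1 wh), x = u - us and y = w - wh.
   Young's inequality beta <A x, B y> <= beta^2/4 |A x|^2 + |B y|^2 turns the
   strong submonotonicity estimate d <= <A x, B y> + |x|^2_M - <Xi x, x> into
     beta (d - |x|^2_M) <= |B y|^2 - |x|^2_{Xi_alpha}.
   Multiplying by alpha gives the second claim.  For alpha >= 1 the first claim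
   follows because d - |x|^2_M <= 0 and beta <= 1.  For alpha < 1 take us = p,
   the common projection, where d = |x|^2_M, so |u - p|^2_{Xi_alpha} <= |B y|^2;
   as p also minimises |u - .|^2_{M - Xi_alpha} over T^-1 wh, the right-hand
   side of the subregularity estimate is smallest at us = p. *)

Section InnerProduct.
Context {R : realType} {V : normedModType R} (ip : V -> V -> R).
Hypothesis hip : inner_product ip.

Lemma ipC x y : ip x y = ip y x.
Proof. by case: hip. Qed.

Lemma ip0l z : ip 0 z = 0.
Proof.
case: hip => _ lin _; have := lin 1 0 0 z.
rewrite scale1r addr0 mul1r => h.
by apply: (addrI (ip 0 z)); rewrite addr0 -h.
Qed.

Lemma ipZl a x z : ip (a *: x) z = a * ip x z.
Proof. by case: hip => _ lin _; have := lin a x 0 z; rewrite !addr0 ip0l addr0. Qed.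

Lemma ipDl x y z : ip (x + y) z = ip x z + ip y z.
Proof. by case: hip => _ lin _; have := lin 1 x y z; rewrite scale1r mul1r. Qed.

Lemma ipBl x y z : ip (x - y) z = ip x z - ip y z.
Proof. by rewrite ipDl -scaleN1r ipZl mulN1r. Qed.

Lemma ipZr a x z : ip z (a *: x) = a * ip z x.
Proof. by rewrite ipC ipZl ipC. Qed.

Lemma ipBr x y z : ip z (x - y) = ip z x - ip z y.
Proof. by rewrite ipC ipBl !(ipC z). Qed.

Lemma ipNN x : ip (- x) (- x) = ip x x.
Proof. by rewrite -scaleN1r ipZl ipZr !mulN1r opprK. Qed.

Lemma ip_ge0 x : 0 <= ip x x.
Proof. by case: hip => _ _ ->; rewrite exprn_ge0. Qed.

Lemma ip_young k a b : 2 * k * ip a b <= k ^+ 2 * ip a a + ip b b.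
Proof.
have := ip_ge0 (k *: a - b).
by rewrite ipBl !ipBr !ipZl !ipZr (ipC b a) => ?; nra.
Qed.

Lemma nsq_opsub (S T : V -> V) x : nsq ip (opsub S T) x = nsq ip S x - nsq ip T x.
Proof. exact: ipBl. Qed.

Lemma nsq_opscale a (T : V -> V) x : nsq ip (opscale a T) x = a * nsq ip T x.
Proof. exact: ipZl. Qed.

Lemma psd_opsub (P M : V -> V) : ople ip P M -> psd ip (opsub M P).
Proof. by move=> PM x; rewrite nsq_opsub subr_ge0. Qed.

End InnerProduct.

Lemma linear_funN {R : realType} {U W : normedModType R} (f : U -> W) :
  linear f -> forall v, f (- v) = - f v.
Proof.
move=> lin v.
have f0 : f 0 = 0.
  have := lin 1 0 0; rewrite !scale1r addr0 => h.
  by apply: (addrI (f 0)); rewrite addr0 -h.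
by have := lin (-1) v 0; rewrite addr0 f0 addr0 !scaleN1r.
Qed.

Lemma ereal_inf_EFin_ge0 {R : realType} {T : Type} (S : set T) (h : T -> R) :
  (forall x, S x -> 0 <= h x) -> (0 <= ereal_inf [set (h x)%:E | x in S])%E.
Proof. by move=> h0; apply: le_ereal_inf_tmp => _ [x Sx <-]; rewrite lee_fin h0. Qed.

Lemma lb_ereal_inf_add {R : realType} {T1 T2 : Type} (S1 : set T1) (S2 : set T2)
    (f : T1 -> R) (g : T2 -> R) (d : R) :
  (forall x, S1 x -> 0 <= f x) -> (forall y, S2 y -> 0 <= g y) ->
  (forall x y, S1 x -> S2 y -> d <= f x + g y) ->
  (d%:E <= ereal_inf [set (f x)%:E | x in S1] + ereal_inf [set (g y)%:E | y in S2])%E.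
Proof.
move=> f0 g0 dfg; have If0 := ereal_inf_EFin_ge0 f0.
have := ereal_inf_EFin_ge0 g0; case Ig: (ereal_inf _) => [r| |] // _.
  rewrite -leeBlDr // -EFinB; apply: le_ereal_inf_tmp => _ [x S1x <-].
  rewrite lee_fin lerBlDr addrC -lerBlDr -lee_fin -Ig.
  by apply: le_ereal_inf_tmp => _ [y S2y <-]; rewrite lee_fin lerBlDl dfg.
by rewrite addey ?leey // gt_eqF // (lt_le_trans (ltNyr 0) If0).
Qed.

Section SquaredDistance.
Context {R : realType} {U : normedModType R} (ip : U -> U -> R) (M : U -> U).
Context (A : set U).

Lemma dist2_le u a : A a -> (dist2 ip M u A <= (nsq ip M (u - a))%:E)%E.
Proof. by move=> Aa; apply: ereal_inf_lbound; exists a. Qed.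

Lemma dist2_ge0 u : psd ip M -> (0 <= dist2 ip M u A)%E.
Proof. by move=> M0; apply: ereal_inf_EFin_ge0 => a _. Qed.

Lemma dist2_fin_num u a : psd ip M -> A a -> dist2 ip M u A \is a fin_num.
Proof.
move=> M0 Aa; rewrite ge0_fin_numE ?dist2_ge0 //.
exact: le_lt_trans (dist2_le u Aa) (ltry _).
Qed.

Lemma fine_dist2_le u a : psd ip M -> A a -> fine (dist2 ip M u A) <= nsq ip M (u - a).
Proof. by move=> M0 Aa; rewrite -lee_fin fineK ?(dist2_fin_num u M0 Aa) ?dist2_le. Qed.

Lemma dist2_is_proj u p : is_proj ip M A u p -> dist2 ip M u A = (nsq ip M (u - p))%:E.
Proof.
case=> Ap p_min; apply/eqP; rewrite eq_le dist2_le //=.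
by apply: le_ereal_inf_tmp => _ [a Aa <-]; rewrite lee_fin p_min.
Qed.

End SquaredDistance.

Section PartialRegularity.
Context {R : realType} {U : normedModType R} (ip : U -> U -> R).
Hypothesis hip : inner_product ip.
Variables (T : U -> set U) (uh wh : U).
Local Notation S := (invimg T wh).
Hypothesis hgraph : S uh.

Lemma submonotone_dist2_le (Xi N M : U -> U) :
  partially_strongly_submonotone ip T Xi N M uh wh ->
  exists2 V, nbhs uh V & forall u w us, V u -> T u w -> S us ->
    fine (dist2 ip M u S) <= ipT ip N (w - wh) (u - us) + nsq ip (opsub M Xi) (u - us).
Proof.
move=> [M0 [V [nV hV]]]; exists V => [//|u w us Vu Tw Sus].
rewrite -lee_fin (fineK (dist2_fin_num u M0 hgraph)).
by apply: le_trans (hV u w Vu Tw) _; apply: ereal_inf_lbound; exists us.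
Qed.

Lemma partially_subregular_intro (P N M : U -> U) :
  psd ip N -> psd ip M -> ople ip P M ->
  (exists2 V, nbhs uh V & forall u w us, V u -> T u w -> S us ->
    fine (dist2 ip M u S) <= nsq ip N (wh - w) + nsq ip (opsub M P) (u - us)) ->
  partially_subregular ip T P N M uh wh.
Proof.
move=> N0 M0 PM [V nV hV]; split => //; exists V; split => // u Vu.
rewrite -(fineK (dist2_fin_num u M0 hgraph)).
apply: lb_ereal_inf_add => [w _ | us _ | w us Tw Sus]; first exact: N0.
  exact: psd_opsub.
exact: hV.
Qed.

End PartialRegularity.

Section SubmonotoneSubregular.
Context {R : realType} {U W : normedModType R}.
Variables (ipU : U -> U -> R) (ipW : W -> W -> R).
Hypotheses (hU : inner_product ipU) (hW : inner_product ipW).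
Variables (T : U -> set U) (uh wh : U) (Xi N M : U -> U) (alpha : R).
Variables (A B : U -> W) (As Bs : W -> U).
Local Notation S := (invimg T wh).
Local Notation BsB := (fun u => Bs (B u)).
Hypotheses (hgraph : S uh) (hMpsd : psd ipU M) (halpha : 0 < alpha) (hB : linear B).
Hypotheses (hAs : is_adjoint ipU ipW A As) (hBs : is_adjoint ipU ipW B Bs).
Hypothesis hNAB : forall u, N u = As (B u).

Definition Xi_alpha : U -> U := fun u => alpha^-1 *: Xi u - (alpha ^- 2 / 4) *: As (A u).

Hypothesis hXi_alpha : ople ipU Xi_alpha (opscale (Num.min 1 alpha^-1) M).

Lemma nsq_BsB y : nsq ipU BsB y = ipW (B y) (B y).
Proof. by rewrite /nsq (ipC hU) -hBs. Qed.

Lemma nsq_BsB_subC w : nsq ipU BsB (wh - w) = ipW (B (w - wh)) (B (w - wh)).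
Proof. by rewrite nsq_BsB -opprB (linear_funN hB) (ipNN hW). Qed.

Lemma psd_BsB : psd ipU BsB.
Proof. by move=> y; rewrite nsq_BsB ip_ge0. Qed.

Lemma nsq_Xi_alpha x :
  nsq ipU Xi_alpha x = alpha^-1 * ipU (Xi x) x - alpha^-2 / 4 * ipW (A x) (A x).
Proof. by rewrite /nsq (ipBl hU) !(ipZl hU) [ipU (As _) x](ipC hU) -hAs. Qed.

Lemma Xi_alpha_young x y :
  alpha^-1 * (ipW (A x) (B y) - ipU (Xi x) x) <= ipW (B y) (B y) - nsq ipU Xi_alpha x.
Proof.
have := ip_young hW (alpha^-1 / 2) (A x) (B y).
by rewrite nsq_Xi_alpha -exprVn => ?; nra.
Qed.

Lemma Xi_alpha_le : ople ipU Xi_alpha M.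
Proof.
move=> x; apply: le_trans (hXi_alpha x) _.
by rewrite nsq_opscale // ler_piMl // ge_min lexx.
Qed.

Lemma opscale_Xi_alpha_le : ople ipU (opscale alpha Xi_alpha) M.
Proof.
move=> x; have min_le : Num.min 1 alpha^-1 <= alpha^-1 by rewrite ge_min lexx orbT.
have := hXi_alpha x; rewrite !nsq_opscale // => /le_trans/(_ (ler_wpM2r (hMpsd x) min_le)).
move/(ler_wpM2l (ltW halpha))/le_trans; apply.
by rewrite mulrA mulfV ?lt0r_neq0 // mul1r.
Qed.

Lemma submonotone_Xi_alpha_bound :
  partially_strongly_submonotone ipU T Xi N M uh wh ->
  exists2 V, nbhs uh V & forall u w us, V u -> T u w -> S us ->
    alpha^-1 * (fine (dist2 ipU M u S) - nsq ipU M (u - us))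
      <= ipW (B (w - wh)) (B (w - wh)) - nsq ipU Xi_alpha (u - us).
Proof.
move=> hsub; have [V nV hV] := submonotone_dist2_le hgraph hsub.
exists V => [//|u w us Vu Tw Sus]; apply: le_trans (Xi_alpha_young _ _).
apply: ler_wpM2l; first by rewrite invr_ge0 ltW.
have := hV u w us Vu Tw Sus; rewrite nsq_opsub // /nsq /ipT hNAB (ipC hU) -hAs.
lra.
Qed.

Lemma subregular_Xi_alpha :
  (alpha < 1 -> common_proj ipU M (opsub M Xi_alpha) S uh) ->
  partially_strongly_submonotone ipU T Xi N M uh wh ->
  partially_subregular ipU T Xi_alpha BsB M uh wh.
Proof.
move=> hproj hsub; have [V nV hV] := submonotone_Xi_alpha_bound hsub.
apply: partially_subregular_intro => //; [exact: psd_BsB | exact: Xi_alpha_le |].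
have [alpha_lt1|alpha_ge1] := ltP alpha 1.
- have [V' [nV' hV']] := hproj alpha_lt1.
  exists (V `&` V'); first exact: filterI.
  move=> u w us [Vu V'u] Tw Sus; have [p [pM pMX]] := hV' u V'u.
  have := hV u w p Vu Tw pM.1; rewrite (dist2_is_proj pM) /= subrr mulr0 subr_ge0.
  have := pMX.2 us Sus; rewrite nsq_BsB_subC !nsq_opsub //.
  lra.
- exists V => [//|u w us Vu Tw Sus].
  have := fine_dist2_le u hMpsd Sus; have := hV u w us Vu Tw Sus.
  have : alpha^-1 <= 1 by rewrite invf_le1.
  have : 0 < alpha^-1 by rewrite invr_gt0.
  rewrite nsq_BsB_subC nsq_opsub //.
  nra.
Qed.

Lemma subregular_opscale_Xi_alpha :
  partially_strongly_submonotone ipU T Xi N M uh wh ->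
  partially_subregular ipU T (opscale alpha Xi_alpha) (opscale alpha BsB) M uh wh.
Proof.
move=> hsub; have [V nV hV] := submonotone_Xi_alpha_bound hsub.
apply: partially_subregular_intro => //; [|exact: opscale_Xi_alpha_le|].
  by move=> y; rewrite nsq_opscale //; apply: mulr_ge0; [exact: ltW | exact: psd_BsB].
exists V => [//|u w us Vu Tw Sus].
have := hV u w us Vu Tw Sus.
rewrite -(ler_pM2l halpha) mulrA mulfV ?lt0r_neq0 // mul1r.
rewrite nsq_opscale // nsq_BsB_subC nsq_opsub // nsq_opscale //.
nra.
Qed.

End SubmonotoneSubregular.

Theorem lemma4p9 (R : realType) (U W : completeNormedModType R)
  (ipU : U -> U -> R) (ipW : W -> W -> R)
  (hU : inner_product ipU) (hW : inner_product ipW)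
  (T : U -> set U) (uh wh : U) (hgraph : T uh wh)
  (Xi N M : U -> U)
  (hXi : bounded_linear Xi) (hN : bounded_linear N) (hM : bounded_linear M)
  (hMpsd : psd ipU M)
  (alpha : R) (halpha : 0 < alpha)
  (A B : U -> W) (As Bs : W -> U)
  (hA : bounded_linear A) (hB : bounded_linear B)
  (hAs : is_adjoint ipU ipW A As) (hBs : is_adjoint ipU ipW B Bs)
  (hNAB : forall u, N u = As (B u)) :
  let Xia : U -> U := fun u => alpha^-1 *: Xi u - (alpha ^- 2 / 4) *: As (A u) in
  ople ipU Xia (opscale (Num.min 1 alpha^-1) M) ->
  ((alpha < 1 -> common_proj ipU M (opsub M Xia) (invimg T wh) uh) ->
     partially_strongly_submonotone ipU T Xi N M uh wh ->
     partially_subregular ipU T Xia (fun u => Bs (B u)) M uh wh)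
  /\
  (partially_strongly_submonotone ipU T Xi N M uh wh ->
     partially_subregular ipU T (opscale alpha Xia)
       (opscale alpha (fun u => Bs (B u))) M uh wh).
Proof.
move=> Xia hXia; split.
- exact: (subregular_Xi_alpha hU hW hgraph hMpsd halpha hB.1 hAs hBs hNAB hXia).
- exact: (subregular_opscale_Xi_alpha hU hW hgraph hMpsd halpha hB.1 hAs hBs hNAB hXia).
Qed.
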